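(* Let $n$ be a natural number and let $(A,+,\circ)$ be a left brace of cardinality $p^{n}$, where $p$ is a prime with $p>n+1$. Then $pA=\{pa: a\in A\}$ is a brace (a sub-brace of $A$), and every product of any $p-1$ elements of $pA$ under the operation $*$ (with any distribution of brackets) is zero; hence $pA$ is a strongly nilpotent brace of nilpotency index at most $p-1$. Moreover, every $*$-product (with any distribution of brackets) of $i$ elements of $pA$ together with any number of elements of $A$ lies in $p^{i}A$; hence every such product containing $p-1$ elements from $pA$ (and any number of elements from $A$) is zero. Finally, $p^{p-1}A=0$.
   Context: A (left) brace is a set $A$ with operations $+,\circ$ such that $(A,+)$ is an abelian group, $(A,\circ)$ is a group, and $a\circ(b+c)+a=a\circ b+a\circ c$ for all $a,b,c\in A$. One writes $a*b=a\circ b-a-b$; then $a*(b+c)=a*b+a*c$. For an integer $m$, $mA=\{ma:a\in A\}$. A brace $B$ is strongly nilpotent if there is $k$ with $B^{[k]}=0$, where $B^{[1]}=B$ and $B^{[i]}$ is the additive span of all $a*b$ with $a\in B^{[j]}$, $b\in B^{[i-j]}$, $0<j<i$; the least such $k$ is the nilpotency index. *)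

From mathcomp Require Import all_boot all_order all_algebra.
Set Implicit Arguments. Unset Strict Implicit. Unset Printing Implicit Defensive.
Import GRing.Theory.
Local Open Scope ring_scope.

Section BraceDefs.
Variable A : zmodType.
Variable circ : A -> A -> A.

Definition circ_id (e : A) : Prop := forall x, circ e x = x /\ circ x e = x.

Definition is_brace : Prop :=
  [/\ (forall a b c, circ a (circ b c) = circ (circ a b) c),
      (exists e, circ_id e /\ forall a, exists b, circ a b = e /\ circ b a = e)
    & (forall a b c, circ a (b + c) + a = circ a b + circ a c)].

Definition star (a b : A) : A := circ a b - a - b.

Definition is_subbrace (S : A -> Prop) : Prop :=
  S 0 /\ (forall a b, S a -> S b -> S (a + b)) /\ (forall a, S a -> S (- a)) /\
  (forall e, circ_id e -> S e) /\
  (forall a b, S a -> S b -> S (circ a b)) /\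
  (forall e a b, circ_id e -> S a -> circ a b = e -> S b).

Definition multA (m : nat) (x : A) : Prop := exists a : A, x = a *+ m.

Inductive spow (B : A -> Prop) : nat -> A -> Prop :=
| spow_base : forall x, B x -> spow B 1 x
| spow_star : forall i j a b, (0 < j)%N -> (j < i)%N ->
    spow B j a -> spow B (i - j) b -> spow B i (star a b)
| spow_zero : forall i, (1 < i)%N -> spow B i 0
| spow_add : forall i x y, (1 < i)%N -> spow B i x -> spow B i y -> spow B i (x + y)
| spow_opp : forall i x, (1 < i)%N -> spow B i x -> spow B i (- x).

Definition snilp_le (B : A -> Prop) (k : nat) : Prop :=
  forall x, spow B k x -> x = 0.

(* bracketed *-products; each leaf carries an element and a flag
   saying whether it is counted as one of the elements of pA *)
Inductive sterm : Type :=
| Leaf : bool -> A -> sterm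
| Node : sterm -> sterm -> sterm.

Fixpoint seval (t : sterm) : A :=
  match t with Leaf _ a => a | Node t1 t2 => star (seval t1) (seval t2) end.

Fixpoint nleaves (t : sterm) : nat :=
  match t with Leaf _ _ => 1 | Node t1 t2 => nleaves t1 + nleaves t2 end.

Fixpoint nflag (t : sterm) : nat :=
  match t with Leaf b _ => nat_of_bool b | Node t1 t2 => nflag t1 + nflag t2 end.

Fixpoint flagged_in (S : A -> Prop) (t : sterm) : Prop :=
  match t with
  | Leaf b a => b -> S a
  | Node t1 t2 => flagged_in S t1 /\ flagged_in S t2 end.

Fixpoint leaves_in (S : A -> Prop) (t : sterm) : Prop :=
  match t with
  | Leaf _ a => S a
  | Node t1 t2 => leaves_in S t1 /\ leaves_in S t2 end.

End BraceDefs.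

From HB Require Import structures.
From mathcomp Require Import all_boot all_order all_algebra all_fingroup all_solvable.
Set Implicit Arguments. Unset Strict Implicit. Unset Printing Implicit Defensive.
Import GRing.Theory.
Local Open Scope ring_scope.

(* The group (A, circ) has order p^n and acts on (A, +) by the additive maps
   lam a, so the ascending series V_0 = 0, V_(i+1) = {v | a * v \in V_i for all a}
   grows strictly until it reaches A (a p-group acting on the nontrivial p-group
   A / V_i has a nonzero fixed point), hence V_n = A and every iterated product
   a * (a * ... (a * b)) with n factors a vanishes.  Expanding
   lam_a^(p^j) = (1 + star a)^(p^j) and the circ-power a^(p^j) binomially, the
   terms with k >= p > n star factors vanish and the others carry C(p^j, k) with
   0 < k < p, which is divisible by p^j.  This gives a^(p^j) * A \subset p^j A, and
   then (p^j c) * A \subset p^j A by induction along the series, since p^j c is a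
   circ-product of such a power and of p^j d with d one step lower.  Hence
   p^i A * p^k A \subset p^(i+k) A, and every claim follows because
   p^(p-1) A \subset p^n A = 0. *)

Section BraceArithmetic.
Variables (A : zmodType) (circ : A -> A -> A).
Hypothesis braceA : is_brace circ.

Lemma circA a b c : circ a (circ b c) = circ (circ a b) c.
Proof. by case: braceA. Qed.

Lemma circDr a b c : circ a (b + c) = circ a b + circ a c - a.
Proof. by case: braceA => _ _ /(_ a b c) <-; rewrite addrK. Qed.

Lemma circr0 a : circ a 0 = a.
Proof. by have := circDr a 0 0; rewrite addr0 => /(canLR (subrK a)) /addrI. Qed.

Lemma circ_id0 e : circ_id circ e -> e = 0.
Proof. by move=> /(_ 0) [e0 _]; rewrite -e0 circr0. Qed.

Lemma circ0r a : circ 0 a = a.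
Proof. by case: braceA => _ [e [/[dup] /circ_id0 -> /(_ a) []]]. Qed.

Lemma circ_inv a : exists b, circ a b = 0 /\ circ b a = 0.
Proof. by case: braceA => _ [e [/[dup] /circ_id0 -> _]]. Qed.

Definition lam a x := circ a x - a.

Lemma lamD a x y : lam a (x + y) = lam a x + lam a y.
Proof. by rewrite /lam circDr addrACA addrA. Qed.

Lemma lamx0 a : lam a 0 = 0.
Proof. by rewrite /lam circr0 subrr. Qed.

Lemma lamMn a x m : lam a (x *+ m) = lam a x *+ m.
Proof. by elim: m => [|m IHm]; rewrite ?mulr0n ?lamx0 // !mulrS lamD IHm. Qed.

Lemma lam0x x : lam 0 x = x.
Proof. by rewrite /lam circ0r subr0. Qed.

Lemma lam_circ a b x : lam (circ a b) x = lam a (lam b x).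
Proof.
rewrite /lam -circA; set y := circ b x - b.
have -> : circ b x = b + y by rewrite addrC subrK.
by rewrite circDr addrAC [circ a b + _]addrC addrK.
Qed.

Lemma circ_lam a b : circ a b = a + lam a b.
Proof. by rewrite /lam addrC subrK. Qed.

Lemma starE a b : star circ a b = lam a b - b.
Proof. by []. Qed.

Lemma circE a b : circ a b = a + b + star circ a b.
Proof. by rewrite /star -[circ a b - a - b]addrA -opprD [RHS]addrC subrK. Qed.

Lemma starD a x y : star circ a (x + y) = star circ a x + star circ a y.
Proof. by rewrite !starE lamD opprD addrACA. Qed.

Lemma starMn a x m : star circ a (x *+ m) = star circ a x *+ m.
Proof. by rewrite !starE lamMn mulrnBl. Qed.

Lemma star0x x : star circ 0 x = 0.
Proof. by rewrite starE lam0x subrr. Qed.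

End BraceArithmetic.

Section FixSeries.
Variables (gT : finGroupType) (A : finZmodType) (to : {action gT &-> A}).
Hypothesis toD : forall g, {morph to^~ g : x y / x + y}.

Lemma act0 g : to 0 g = 0.
Proof. by apply: (addIr (to 0 g)); rewrite -toD !add0r. Qed.

Fixpoint fix_series i : {set A} :=
  if i is i'.+1 then [set v | [forall g, to v g - v \in fix_series i']] else [set 0].

Lemma fix_seriesS i v : (v \in fix_series i.+1) = [forall g, to v g - v \in fix_series i].
Proof. by rewrite inE. Qed.

Lemma fix_series_group_set i : group_set (fix_series i).
Proof.
elim: i => [|i IHi]; first exact: group_set_one.
apply/group_setP; split=> [|x y]; rewrite !fix_seriesS.
  by apply/forallP => g; rewrite act0 subrr; exact: (group_setP IHi).1.
move=> /forallP Vx /forallP Vy; apply/forallP => g.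
by rewrite /= toD opprD addrACA; exact: (group_setP IHi).2 _ _ (Vx g) (Vy g).
Qed.

Canonical fix_series_group i := Group (fix_series_group_set i).

Lemma fix_series_act i g v : v \in fix_series i -> to v g \in fix_series i.
Proof.
case: i => [|i]; first by rewrite !inE => /eqP ->; rewrite act0.
rewrite !fix_seriesS => /forallP Vv; apply/forallP => h.
have -> : to (to v g) h - to v g = (to v (g * h)%g - v) - (to v g - v).
  by rewrite actM opprB addrA subrK.
by rewrite (groupM (Vv _)) ?groupV.
Qed.

Lemma fix_series_subS i : fix_series i \subset fix_series i.+1.
Proof.
elim: i => [|i IHi]; apply/subsetP => v.
  by rewrite !inE => /eqP ->; apply/forallP => g; rewrite act0 subrr inE.
by rewrite !fix_seriesS => /forallP Vv; apply/forallP => g; apply: (subsetP IHi).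
Qed.

Lemma fix_series_sub i k : (i <= k)%N -> fix_series i \subset fix_series k.
Proof.
move=> /subnK <-; elim: (k - i)%N => [|d IHd] //.
exact: subset_trans IHd (fix_series_subS _).
Qed.

Lemma iter_fix_series i m g v : v \in fix_series i ->
  iter m (fun w => to w g - w) v \in fix_series (i - m).
Proof.
move=> Vv; elim: m => [|m IHm]; first by rewrite subn0.
rewrite iterS subnS; case: (i - m)%N IHm => [|k] /=; last by rewrite fix_seriesS => /forallP.
by rewrite !inE => /eqP ->; rewrite act0 subrr.
Qed.

Variables (p n : nat).
Hypotheses (p_pr : prime p) (pG : (p.-group [set: gT])%g) (cardA : #|A| = (p ^ n)%N).

Lemma exists_fixed_coset (V : {group A}) :
  (forall g v, v \in V -> to v g \in V) -> V \proper [set: A] ->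
  exists2 u, u \notin V & forall g, to u g - u \in V.
Proof.
move=> Vto ltVA.
have actVu g u : (to^* )%act (V :* u)%g g = (V :* to u g)%g.
  apply/eqP; rewrite eqEcard; apply/andP; split.
    apply/subsetP => y; rewrite /= setactE => /imsetP [x /rcosetP [v Vv ->] ->].
    by apply/rcosetP; exists (to v g); rewrite ?Vto //= toD.
  by rewrite /= setactE card_imset ?card_rcoset //; apply: act_inj.
set S := rcosets V [set: A].
have SgS g C : C \in S -> (to^* )%act C g \in S.
  by case/rcosetsP => u _ ->; rewrite actVu; apply/rcosetsP; exists (to u g); rewrite ?inE.
have actS : [acts [set: gT], on S | to^*].
  apply/actsP => g _ C; apply/idP/idP; last exact: SgS.
  by move/(SgS g^-1%g); rewrite actK.
have p_dvd_S : (p %| #|S|)%N.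
  change (p %| #|[set: A] : V|%g)%N.
  have : (#|[set: A] : V|%g %| p ^ n)%N by rewrite -cardA -cardsT dvdn_indexg.
  case/(dvdn_pfactor _ _ p_pr) => [[|k]] _ idx; last by rewrite idx expnS dvdn_mulr.
  by move: (indexg_gt1 [set: A] V); rewrite idx (proper_subn ltVA).
have VF : (V : {set A}) \in 'Fix_(S | to^* )([set: gT])%g.
  rewrite inE; apply/andP; split; first by apply/rcosetsP; exists 0; rewrite ?inE ?rcoset1.
  by apply/afixP => g _; rewrite -{1}(rcoset1 V) actVu act0 rcoset1.
have := pgroup_fix_mod pG actS; rewrite (eqP p_dvd_S) => /esym /eqP p_dvd_F.
have : (0 < #|'Fix_(S | to^* )([set: gT])%g :\ (V : {set A})|)%N.
  move: p_dvd_F; rewrite (cardsD1 (V : {set A})) VF add1n; case: #|_| => //.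
  by rewrite modn_small ?prime_gt1.
rewrite card_gt0 => /set0Pn [C /setD1P [CV]].
rewrite inE => /andP [/rcosetsP [u _ Cu] /afixP]; rewrite Cu => Vu_fixed.
exists u => [|g]; first by apply: contra CV => Vu; rewrite Cu rcoset_id.
have : to u g \in (V :* u)%g by rewrite -(Vu_fixed g (in_setT g)) actVu rcoset_refl.
by case/rcosetP => v Vv ->; rewrite /= addrK.
Qed.

Lemma fix_series_proper i :
  fix_series i \proper [set: A] -> fix_series i \proper fix_series i.+1.
Proof.
move=> ltVA; rewrite properE fix_series_subS /=.
have [u Vu u_fixed] := exists_fixed_coset (@fix_series_act i) ltVA.
by apply/subsetPn; exists u; rewrite // fix_seriesS; apply/forallP.
Qed.

Lemma fix_series_card i : fix_series i = [set: A] \/ (p ^ i %| #|fix_series i|)%N.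
Proof.
elim: i => [|i [Vfull|IHi]]; first by right; rewrite expn0 dvd1n.
  by left; apply/eqP; rewrite eqEsubset subsetT -Vfull fix_series_subS.
have [VSfull|VSproper] := eqVneq (fix_series i.+1) [set: A]; [by left | right].
have ltVA : fix_series i \proper [set: A].
  by apply: sub_proper_trans (fix_series_subS i) _; rewrite properT.
have ltVVS := fix_series_proper ltVA.
rewrite -(Lagrange (proper_sub ltVVS)) expnSr dvdn_mul //.
have : (#|fix_series i.+1 : fix_series i|%g %| p ^ n)%N.
  by rewrite -cardA (dvdn_trans (dvdn_indexg _ _)) // -[X in (_ %| X)%N]cardsT cardSg ?subsetT.
case/(dvdn_pfactor _ _ p_pr) => [[|k]] _ idx; last by rewrite idx expnS dvdn_mulr.
by move: (indexg_gt1 (fix_series i.+1) (fix_series i)); rewrite idx (proper_subn ltVVS).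
Qed.

Lemma fix_series_full : fix_series n = [set: A].
Proof.
have [//|Vproper] := eqVneq (fix_series n) [set: A].
case: (fix_series_card n) => [//|/dvdn_leq].
move: Vproper; rewrite -properT => /proper_card.
rewrite cardsT cardA => ltVA /(_ (cardG_gt0 (fix_series_group n))).
by rewrite leqNgt ltVA.
Qed.

Lemma iter_fix_series_eq0 m g v : (n <= m)%N -> iter m (fun w => to w g - w) v = 0.
Proof.
move=> le_nm; have /(iter_fix_series m g) : v \in fix_series n by rewrite fix_series_full.
have -> : (n - m = 0)%N by apply/eqP; rewrite subn_eq0.
by rewrite inE => /eqP.
Qed.
End FixSeries.

Section IteratedAdditive.
Variables (A : zmodType) (L : A -> A).
Hypothesis LD : {morph L : x y / x + y}.

Let L0 : L 0 = 0.
Proof. by apply: (addIr (L 0)); rewrite -LD !add0r. Qed.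

Let LMn x k : L (x *+ k) = L x *+ k.
Proof. by elim: k => [|k IHk]; rewrite ?mulr0n ?L0 // !mulrS LD IHk. Qed.

Let L_sum k (F : 'I_k -> A) : L (\sum_(i < k) F i) = \sum_(i < k) L (F i).
Proof. exact: (big_morph L LD L0). Qed.

Lemma iter_addL_binomial k b :
  iter k (fun x => x + L x) b = \sum_(m < k.+1) iter m L b *+ 'C(k, m).
Proof.
elim: k => [|k IHk]; first by rewrite big_ord_recl big_ord0 /= addr0.
rewrite iterS IHk L_sum [RHS]big_ord_recl /= bin0.
under [in RHS]eq_bigr => i _ do rewrite binS mulrnDr.
rewrite big_split /= addrA; congr (_ + _); last by apply: eq_bigr => i _; rewrite LMn.
by rewrite big_ord_recl big_ord_recr /= bin0 bin_small // mulr0n addr0.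
Qed.

Lemma iter_affine_binomial a k :
  iter k (fun y => a + y + L y) 0 = \sum_(m < k) iter m L a *+ 'C(k, m.+1).
Proof.
elim: k => [|k IHk]; first by rewrite big_ord0.
rewrite iterS IHk L_sum.
under [in RHS]eq_bigr => i _ do rewrite binS mulrnDr.
rewrite big_split /= big_ord_recr big_ord_recl /= bin_small // bin0 mulr0n addr0.
rewrite -addrA [a + _]addrC -addrA; congr (_ + _); rewrite addrC; congr (_ + _).
by apply: eq_bigr => i _; rewrite LMn.
Qed.

End IteratedAdditive.

Lemma pfactor_dvd_binS p j m : prime p -> (m.+1 < p)%N -> (p ^ j %| 'C(p ^ j, m.+1))%N.
Proof.
move=> p_pr lt_mp; have : (p ^ j %| m.+1 * 'C(p ^ j, m.+1))%N.
  by rewrite -mul_bin_diag dvdn_mulr.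
rewrite Gauss_dvdr // coprimeXl // prime_coprime //.
by apply/negP => /(dvdn_leq (ltn0Sn m)); rewrite leqNgt lt_mp.
Qed.

Section MultA.
Variable A : zmodType.
Implicit Types x y : A.

Lemma multA0 m : multA m (0 : A).
Proof. by exists 0; rewrite mul0rn. Qed.

Lemma multAD m x y : multA m x -> multA m y -> multA m (x + y).
Proof. by move=> [a ->] [b ->]; exists (a + b); rewrite mulrnDl. Qed.

Lemma multAN m x : multA m x -> multA m (- x).
Proof. by move=> [a ->]; exists (- a); rewrite mulNrn. Qed.

Lemma multA_mulrn m x : multA m (x *+ m).
Proof. by exists x. Qed.

End MultA.

Lemma mulrn_card (A : finZmodType) (a : A) : a *+ #|A| = 0.
Proof. by have := @expg_cardG _ [set: A] a (in_setT a); rewrite cardsT -FinRing.zmodXgE. Qed.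

Section BraceGroup.
Variables (A : finZmodType) (circ : A -> A -> A).
Hypothesis braceA : is_brace circ.

(* (A, circ) with the opposite product, so that lam becomes a right action. *)
Definition circ_group (_ : is_brace circ) : Type := A.
HB.instance Definition _ := Finite.on (circ_group braceA).

Definition circ_mul (x y : circ_group braceA) : circ_group braceA := circ y x.
Definition circ_inv_of (x : circ_group braceA) : circ_group braceA :=
  odflt (0 : A) [pick y : A | circ x y == 0].

Lemma circ_mulA : associative circ_mul.
Proof. by move=> x y z; rewrite /circ_mul circA. Qed.

Lemma circ_mul1 : left_id (0 : A) circ_mul.
Proof. by move=> x; rewrite /circ_mul circr0. Qed.

Lemma circ_mulV : left_inverse (0 : A) circ_inv_of circ_mul.
Proof.
move=> x; rewrite /circ_mul /circ_inv_of; case: pickP => [y /eqP //|].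
by case: (circ_inv braceA x) => y [xy0 _] /(_ y); rewrite xy0 eqxx.
Qed.

HB.instance Definition _ :=
  Finite_isGroup.Build (circ_group braceA) circ_mulA circ_mul1 circ_mulV.

Definition lam_act (x : A) (g : circ_group braceA) : A := lam circ g x.

Lemma lam_act1 : lam_act^~ 1%g =1 id.
Proof. exact: lam0x. Qed.

Lemma lam_actM x : act_morph lam_act x.
Proof. by move=> g h; rewrite /lam_act -lam_circ. Qed.

Definition lam_action := TotalAction lam_act1 lam_actM.

Lemma lam_actionD g : {morph lam_action^~ g : x y / x + y}.
Proof. exact: lamD. Qed.

Definition star_series := fix_series lam_action.

Canonical star_series_group i :=
  @Group _ (star_series i) (fix_series_group_set lam_actionD i).

Lemma star_series_lam i a v : v \in star_series i -> lam circ a v \in star_series i.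
Proof. exact: (fix_series_act lam_actionD). Qed.

Lemma star_series_sub i k : (i <= k)%N -> star_series i \subset star_series k.
Proof. exact: (fix_series_sub lam_actionD). Qed.

Lemma iter_star_series i m a v : v \in star_series i ->
  iter m (star circ a) v \in star_series (i - m).
Proof. exact: (iter_fix_series lam_actionD). Qed.

Lemma star_seriesN i v : v \in star_series i -> - v \in star_series i.
Proof. exact: groupVr. Qed.

Lemma star_series_sum i k (x : 'I_k -> A) (q : 'I_k -> nat) :
  (forall m, x m \in star_series i) -> \sum_(m < k) x m *+ q m \in star_series i.
Proof.
move=> Vx; apply: (big_ind (fun v => v \in star_series i)) => [|u v|m _].
- exact: group1.
- exact: groupM.
by rewrite -FinRing.zmodXgE groupX.
Qed.

Variables (p n : nat).
Hypotheses (p_pr : prime p) (cardA : #|A| = (p ^ n)%N).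

Lemma circ_group_pgroup : (p.-group [set: circ_group braceA])%g.
Proof. by rewrite /pgroup cardsT /= cardA pnatX pnat_id. Qed.

Lemma star_series_full : star_series n = [set: A].
Proof. exact: (fix_series_full lam_actionD p_pr circ_group_pgroup cardA). Qed.

Lemma iter_star_eq0 m a b : (n <= m)%N -> iter m (star circ a) b = 0.
Proof. exact: (iter_fix_series_eq0 lam_actionD p_pr circ_group_pgroup cardA). Qed.

End BraceGroup.

Section PowerMultiples.
Variables (A : finZmodType) (circ : A -> A -> A).
Hypothesis braceA : is_brace circ.
Variables (p n : nat).
Hypotheses (p_pr : prime p) (cardA : #|A| = (p ^ n)%N) (lt_np : (n < p)%N).

Local Notation K j := (p ^ j)%N.

Lemma multA_lam m a x : multA m x -> multA m (lam circ a x).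
Proof. by move=> [y ->]; exists (lam circ a y); rewrite (lamMn braceA). Qed.

Lemma mulrn_bin_pexp j k (x : A) : (0 < k)%N -> ((p <= k)%N -> x = 0) ->
  x *+ 'C(K j, k) = x *+ ('C(K j, k) %/ K j) *+ K j.
Proof.
case: k => // k _ x0; rewrite -mulrnA.
have [lt_kp|/x0 ->] := ltnP k.+1 p; last by rewrite !mul0rn.
by rewrite divnK // pfactor_dvd_binS.
Qed.

Definition star_sub_multA m x := forall b, multA m (star circ x b).

Lemma star_sub_multA_circ m x y :
  star_sub_multA m x -> star_sub_multA m y -> star_sub_multA m (circ x y).
Proof.
move=> mx my b.
have -> : star circ (circ x y) b = lam circ x (star circ y b) + star circ x b.
  by rewrite !starE (lam_circ braceA) addrA -(lamD braceA) subrK.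
exact/multAD/mx/multA_lam/my.
Qed.

Definition circX a k := iter k (circ a) 0.

Lemma lam_circX a k b : lam circ (circX a k) b = iter k (lam circ a) b.
Proof.
elim: k => [|k IHk]; first exact: (lam0x braceA).
by rewrite /circX iterS (lam_circ braceA) -/(circX a k) IHk.
Qed.

Lemma star_sub_multA_circX j a : star_sub_multA (K j) (circX a (K j)).
Proof.
move=> b; rewrite starE lam_circX.
have -> : iter (K j) (lam circ a) b = iter (K j) (fun x => x + star circ a x) b.
  by apply: eq_iter => x; rewrite starE addrC subrK.
rewrite (iter_addL_binomial (starD braceA a)) big_ord_recl /= bin0 addrC addKr.
rewrite (eq_bigr (fun m : 'I_(K j) =>
  iter m.+1 (star circ a) b *+ ('C(K j, m.+1) %/ K j) *+ K j)) => [|m _].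
  by rewrite sumrMnl; apply: multA_mulrn.
apply: mulrn_bin_pexp => // le_pm; rewrite add0n -iterS.
exact: (iter_star_eq0 braceA p_pr cardA _ _ (leq_trans (ltnW lt_np) le_pm)).
Qed.

Lemma star_sub_multA_series j i c :
  c \in star_series braceA i -> star_sub_multA (K j) (c *+ K j).
Proof.
elim: i c => [|i IHi] c.
  by rewrite inE => /eqP -> b; rewrite mul0rn (star0x braceA); apply: multA0.
move=> Vc; set X := circX c (K j).
pose d := \sum_(m < (K j).-1) iter m.+1 (star circ c) c *+ ('C(K j, m.+2) %/ K j).
have Vd : d \in star_series braceA i.
  apply: star_series_sum => m; have := iter_star_series m.+1 c Vc.
  by rewrite subSS; apply/subsetP/star_series_sub/leq_subr.
have X_eq : X = (c + d) *+ K j.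
  rewrite /X /circX (eq_iter (circE circ c)) (iter_affine_binomial (starD braceA c)).
  have Kpos : (0 < K j)%N by rewrite expn_gt0 prime_gt0.
  rewrite -[in LHS](prednK Kpos) big_ord_recl /= prednK // bin1 mulrnDl /d -sumrMnl.
  congr (_ + _); apply: eq_bigr => m _; rewrite add0n -iterS.
  apply: mulrn_bin_pexp => // le_pm.
  exact: (iter_star_eq0 braceA p_pr cardA _ _ (leq_trans lt_np le_pm)).
(* X = (c + d) K with d one step lower in the series, and c K = X o (lam X^-1 (- d)) K. *)
have [Xinv [XXinv _]] := circ_inv braceA X.
have -> : c *+ K j = circ X (lam circ Xinv (- d) *+ K j).
  rewrite circ_lam (lamMn braceA) -(lam_circ braceA) XXinv (lam0x braceA).
  by rewrite X_eq mulrnDl mulNrn addrK.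
apply: star_sub_multA_circ; first exact: star_sub_multA_circX.
exact/IHi/star_series_lam/star_seriesN.
Qed.

Lemma star_sub_multA_mulrn j a : star_sub_multA (K j) (a *+ K j).
Proof.
by apply: (@star_sub_multA_series j n); rewrite (star_series_full braceA p_pr cardA) inE.
Qed.

Lemma multA_star i k x y :
  multA (K i) x -> multA (K k) y -> multA (K (i + k)) (star circ x y).
Proof.
move=> [a ->] [b ->]; rewrite (starMn braceA).
by case: (star_sub_multA_mulrn i a b) => c ->; exists c; rewrite -mulrnA expnD.
Qed.

Lemma multA_pexp_pred_eq0 (x : A) : multA (K p.-1) x -> x = 0.
Proof.
have /dvdnP [q ->] : (K n %| K p.-1)%N by rewrite dvdn_exp2l // -ltnS prednK ?prime_gt0.
by move=> [a ->]; rewrite mulnC mulrnA -cardA mulrn_card mul0rn.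
Qed.

Lemma multA_seval t : flagged_in (multA p) t -> multA (K (nflag t)) (seval circ t).
Proof.
elim: t => [[] a /= ma|t1 IHt1 t2 IHt2 /= [/IHt1 mt1 /IHt2 mt2]].
- exact: ma.
- by exists a.
- exact: multA_star.
Qed.

Lemma multA_seval_leaves t : leaves_in (multA p) t -> multA (K (nleaves t)) (seval circ t).
Proof.
elim: t => [b a|t1 IHt1 t2 IHt2] //=.
by move=> [/IHt1 mt1 /IHt2 mt2]; apply: multA_star.
Qed.

Lemma multA_spow k x : spow circ (multA p) k x -> multA (K k) x.
Proof.
elim=> {k x} [//|i j a b j_gt0 lt_ji _ ma _ mb|i _|i x y _ _ mx _ my|i x _ _ mx].
- by rewrite -(subnKC (ltnW lt_ji)); apply: multA_star.
- exact: multA0.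
- exact: multAD.
- exact: multAN.
Qed.

Lemma is_subbrace_multA : is_subbrace circ (multA p).
Proof.
have star_multA x y : multA p x -> multA p (star circ x y).
  by move=> mx; apply: (@multA_star 1 0) => //; exists y.
split; first exact: multA0.
split; first exact: multAD.
split; first exact: multAN.
split; first by move=> e /(circ_id0 braceA) ->; apply: multA0.
split=> [x y mx my|e x y /(circ_id0 braceA) -> mx].
  by rewrite circE; apply/multAD/star_multA => //; apply: multAD.
rewrite circE => xy0; have -> : y = - (x + star circ x y).
  by apply/eqP; rewrite -addr_eq0 addrCA addrA xy0.
exact/multAN/multAD/star_multA.
Qed.

End PowerMultiples.

Theorem proposition4p1 (n p : nat) (A : finZmodType) (circ : A -> A -> A) :
  is_brace circ -> prime p -> (n.+1 < p)%N -> #|A| = (p ^ n)%N ->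
  is_subbrace circ (multA p) /\
  (forall t : sterm A, leaves_in (multA p) t -> nleaves t = p.-1 ->
     seval circ t = 0) /\
  snilp_le circ (multA p) p.-1 /\
  (forall t : sterm A, flagged_in (multA p) t ->
     multA (p ^ nflag t) (seval circ t)) /\
  (forall t : sterm A, flagged_in (multA p) t -> nflag t = p.-1 ->
     seval circ t = 0) /\
  (forall a : A, a *+ (p ^ p.-1) = 0).
Proof.
move=> braceA p_pr /ltnW lt_np cardA.
have eq0 := multA_pexp_pred_eq0 p_pr cardA lt_np.
have multA_seval_flagged := multA_seval braceA p_pr cardA lt_np.
split; first exact: (is_subbrace_multA braceA p_pr cardA lt_np).
split=> [t /(multA_seval_leaves braceA p_pr cardA lt_np) + nt|]; first by rewrite nt => /eq0.
split=> [x /(multA_spow braceA p_pr cardA lt_np)|]; first exact: eq0.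
split=> [//|]; split=> [t /multA_seval_flagged + nt|a]; first by rewrite nt => /eq0.
by apply: eq0; exists a.
Qed.
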